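(* Let $\star$ be a star operation on a domain $R$. If every nonzero finitely generated ideal of $R$ is $\star$-basic, then every nonzero finitely generated ideal of $R$ is $\star_f$-basic. In particular, if every nonzero finitely generated ideal of $R$ is $v$-basic, then every nonzero finitely generated ideal of $R$ is $t$-basic.
   Context: A star operation on a domain $R$ with quotient field $K$ is a map $I\mapsto I^\star$ on nonzero fractional ideals with $(aI)^\star=aI^\star$ ($0\ne a\in K$), $R^\star=R$, $I\subseteq I^\star$, $I\subseteq J\Rightarrow I^\star\subseteq J^\star$, $I^{\star\star}=I^\star$. The associated star operation $\star_f$ is $I^{\star_f}=\bigcup J^\star$ over finitely generated subideals $J\subseteq I$. $I_v=(R:(R:I))$ with $(R:I)=\{x\in K:xI\subseteq R\}$, and $t=v_f$. For a nonzero ideal $I$, an ideal $J\subseteq I$ is a $\star$-reduction of $I$ if $(JI^n)^\star=(I^{n+1})^\star$ for some integer $n\ge0$; $I$ is $\star$-basic if every $\star$-reduction $J$ of $I$ satisfies $J^\star=I^\star$. *)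

(* Subsets of K are predicates K -> Prop; equality of
   subsets is Leibniz equality of predicates (use functional/propositional
   extensionality to prove such equalities). *)
From HB Require Import structures.
From mathcomp Require Import all_boot all_order all_algebra.
Set Implicit Arguments. Unset Strict Implicit. Unset Printing Implicit Defensive.
Import Order.TTheory GRing.Theory Num.Theory.
Local Open Scope ring_scope.

Section StarOps.
Variable R : idomainType.
Local Notation K := {fraction R}.
Local Notation tofrac := (@FracField.tofrac R).

Definition fset := K -> Prop.

Definition inR : fset := fun x => exists r : R, x = tofrac r.

Definition fsubset (I J : fset) : Prop := forall x, I x -> J x.

Definition nonzero_set (I : fset) : Prop := exists x, I x /\ x <> 0.

Definition submodule (I : fset) : Prop :=
  [/\ I 0, (forall x y, I x -> I y -> I (x + y))
    & (forall r x, inR r -> I x -> I (r * x))].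

Definition frac_ideal (I : fset) : Prop :=
  [/\ submodule I, nonzero_set I
    & exists d : R, d != 0 /\ forall x, I x -> inR (tofrac d * x)].

Definition ideal (I : fset) : Prop := submodule I /\ fsubset I inR.

Definition smul (a : K) (I : fset) : fset := fun x => exists y, I y /\ x = a * y.

Definition span (s : seq K) : fset :=
  fun x => exists c : nat -> R, x = \sum_(i < size s) tofrac (c i) * s`_i.

Definition mulI (I J : fset) : fset :=
  fun x => exists (n : nat) (a b : nat -> K),
    (forall i, (i < n)%N -> I (a i) /\ J (b i)) /\ x = \sum_(i < n) a i * b i.

Fixpoint powI (I : fset) (n : nat) : fset :=
  match n with 0 => inR | n'.+1 => mulI (powI I n') I end.

Definition is_star_op (star : fset -> fset) : Prop :=
  (forall I, frac_ideal I -> frac_ideal (star I)) /\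
  [/\ (forall (a : K) I, a != 0 -> frac_ideal I -> star (smul a I) = smul a (star I)),
      star inR = inR,
      (forall I, frac_ideal I -> fsubset I (star I)),
      (forall I J, frac_ideal I -> frac_ideal J -> fsubset I J ->
                   fsubset (star I) (star J))
    & (forall I, frac_ideal I -> star (star I) = star I)].

Definition star_f (star : fset -> fset) : fset -> fset :=
  fun I x => exists s : seq K,
    fsubset (span s) I /\ nonzero_set (span s) /\ star (span s) x.

Definition colon (I : fset) : fset := fun x => forall y, I y -> inR (x * y).

Definition v_op (I : fset) : fset := colon (colon I).
Definition t_op : fset -> fset := star_f v_op.

Definition fg_ideal (I : fset) : Prop :=
  (exists s : seq K, (forall i, (i < size s)%N -> inR s`_i) /\ I = span s)
  /\ nonzero_set I.

Definition star_reduction (star : fset -> fset) (I J : fset) : Prop :=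
  [/\ ideal J, nonzero_set J, fsubset J I
    & exists n : nat, star (mulI J (powI I n)) = star (powI I n.+1)].

Definition star_basic (star : fset -> fset) (I : fset) : Prop :=
  forall J, star_reduction star I J -> star J = star I.

End StarOps.

From Pilot Require Import Defs.
From HB Require Import structures.
From mathcomp Require Import all_boot all_order all_algebra.
From mathcomp Require Import zify.
From Stdlib Require Import FunctionalExtensionality PropExtensionality.
Set Implicit Arguments. Unset Strict Implicit. Unset Printing Implicit Defensive.
Import Order.TTheory GRing.Theory Num.Theory.
Local Open Scope ring_scope.

(* Let J be a star_f-reduction of I = (s), so (J I^n)^{star_f} = (I^{n+1})^{star_f}.
   The ideal I^{n+1} is finitely generated, and each of its finitely many
   generators lies in the star-closure of a finitely generated subideal of J I^n,
   hence in (J0 I^n)^star for one finitely generated J0 ⊆ J.  Thus J0 is a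
   star-reduction of I, so J0^star = I^star, which forces J^{star_f} = I^{star_f}.
   Only three properties of star are used: it is extensive, X ⊆ Y^star implies
   X^star ⊆ Y^star, and Y^star is a submodule.  They hold for the v-operation on
   all subsets of K, which gives the second part without showing that v is a
   star operation. *)

Section Submodules.
Variable R : idomainType.
Local Notation K := {fraction R}.
Local Notation fset := (fset R).
Local Notation inR := (@inR R).
Local Notation span := (@Defs.span R).

Lemma fsubset_antisym (X Y : fset) : fsubset X Y -> fsubset Y X -> X = Y.
Proof.
move=> XY YX; apply: functional_extensionality => x.
by apply: propositional_extensionality; split; [apply: XY | apply: YX].
Qed.

Lemma submodule_inR : submodule inR.
Proof.
split.
- by exists 0; rewrite rmorph0.
- by move=> x y [a ->] [b ->]; exists (a + b); rewrite rmorphD.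
- by move=> r x [a ->] [b ->]; exists (a * b); rewrite rmorphM.
Qed.

Lemma submodule_sum (S : fset) n (F : 'I_n -> K) :
  submodule S -> (forall i, S (F i)) -> S (\sum_(i < n) F i).
Proof. by case=> S0 SD _ SF; apply: (big_ind S). Qed.

Lemma submodule_span (s : seq K) : submodule (span s).
Proof.
split.
- by exists (fun _ => 0); rewrite big1 // => i _; rewrite rmorph0 mul0r.
- move=> x y [c ->] [d ->]; exists (fun i => c i + d i).
  by rewrite -big_split; apply: eq_bigr => i _; rewrite rmorphD mulrDl.
- move=> r x [a ->] [c ->]; exists (fun i => a * c i).
  by rewrite mulr_sumr; apply: eq_bigr => i _; rewrite rmorphM mulrA.
Qed.

Lemma span_mem (s : seq K) x : x \in s -> span s x.
Proof.
move=> xs; have xi : (index x s < size s)%N by rewrite index_mem.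
exists (fun k => (k == index x s)%:R).
rewrite (bigD1 (Ordinal xi)) //= eqxx rmorph1 mul1r nth_index //.
rewrite big1 ?addr0 // => k /eqP k_neq.
suff /negbTE -> : nat_of_ord k != index x s by rewrite rmorph0 mul0r.
by apply/eqP => k_eq; apply/k_neq/val_inj.
Qed.

Lemma span_sub (s : seq K) (S : fset) :
  submodule S -> (forall x, x \in s -> S x) -> fsubset (span s) S.
Proof.
move=> [S0 SD SM] sS x [c ->]; apply: submodule_sum => // i.
by apply: SM; [exists (c i) | apply/sS/mem_nth].
Qed.

Lemma span_subset (s t : seq K) : {subset s <= t} -> fsubset (span s) (span t).
Proof.
by move=> st; apply: span_sub; [apply: submodule_span | move=> x /st /span_mem].
Qed.

Lemma mulI_mem (X Y : fset) x y : X x -> Y y -> mulI X Y (x * y).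
Proof. by exists 1%N, (fun _ => x), (fun _ => y); rewrite big_ord1. Qed.

Lemma submodule_mulI (X Y : fset) : submodule X -> submodule (mulI X Y).
Proof.
case=> X0 XD XM; split.
- by exists 0%N, (fun _ => 0), (fun _ => 0); rewrite big_ord0.
- move=> x y [n [a [b [Hab ->]]]] [m [a' [b' [Hab' ->]]]].
  exists (n + m)%N, (fun i => if (i < n)%N then a i else a' (i - n)%N),
    (fun i => if (i < n)%N then b i else b' (i - n)%N); split.
  + move=> i im; case: ifP => [/Hab //|/negbT]; rewrite -leqNgt => ni.
    by apply: Hab'; lia.
  + rewrite big_split_ord; congr (_ + _); apply: eq_bigr => i _ /=.
    * by rewrite ltn_ord.
    * by rewrite ltnNge leq_addr /= addKn.
- move=> r x r_in [n [a [b [Hab ->]]]]; exists n, (fun i => r * a i), b; split.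
  + by move=> i /Hab [Xa Yb]; split=> //; apply: XM.
  + by rewrite mulr_sumr; apply: eq_bigr => i _; rewrite mulrA.
Qed.

Lemma mulI_subset (X Y X' Y' : fset) :
  fsubset X X' -> fsubset Y Y' -> fsubset (mulI X Y) (mulI X' Y').
Proof.
move=> XX' YY' x [n [a [b [Hab ->]]]]; exists n, a, b; split=> // i /Hab [Xa Yb].
by split; [apply: XX' | apply: YY'].
Qed.

Lemma mulIC (X Y : fset) : fsubset (mulI X Y) (mulI Y X).
Proof.
move=> x [n [a [b [Hab ->]]]]; exists n, b, a; split.
- by move=> i /Hab [].
- by apply: eq_bigr => i _; rewrite mulrC.
Qed.

Lemma mulI_sub (X Y S : fset) :
  submodule S -> fsubset X inR -> fsubset Y S -> fsubset (mulI X Y) S.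
Proof.
move=> [S0 SD SM] XR YS x [n [a [b [Hab ->]]]]; apply: submodule_sum => // i.
by have [Xa Yb] := Hab i (ltn_ord i); apply: SM; [apply: XR | apply: YS].
Qed.

Definition nz_ideal (X : fset) : Prop := ideal X /\ nonzero_set X.

Lemma nz_ideal_mulI (X Y : fset) : nz_ideal X -> nz_ideal Y -> nz_ideal (mulI X Y).
Proof.
move=> [[Xs XR] [x [Xx x0]]] [[Ys YR] [y [Yy y0]]]; split.
- by split; [apply: submodule_mulI | apply: mulI_sub submodule_inR XR YR].
- exists (x * y); split; first exact: mulI_mem.
  by apply/eqP; rewrite mulf_neq0 //; apply/eqP.
Qed.

Lemma nz_ideal_powI (I : fset) n : nz_ideal I -> nz_ideal (powI I n).
Proof.
move=> Iid; elim: n => [|n IH] /=; last exact: nz_ideal_mulI.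
split; first by split; [apply: submodule_inR |].
by exists 1; split; [exists 1; rewrite rmorph1 | apply/eqP/oner_neq0].
Qed.

Lemma nz_ideal_span (s : seq K) (X : fset) :
  ideal X -> fsubset (span s) X -> nonzero_set (span s) -> nz_ideal (span s).
Proof.
move=> [_ XR] sX s_nz; split=> //; split; first exact: submodule_span.
by move=> x /sX /XR.
Qed.

Lemma nz_ideal_fg (I : fset) : fg_ideal I -> nz_ideal I.
Proof.
move=> [[s [sR ->]] s_nz]; split=> //; split; first exact: submodule_span.
apply: span_sub; first exact: submodule_inR.
by move=> x xs; rewrite -(nth_index 0 xs); apply/sR; rewrite index_mem.
Qed.

Lemma span_allpairs_mul (g s : seq K) a b : span g a -> span s b ->
  span [seq x * y | x <- g, y <- s] (a * b).
Proof.
have [_ _ SM] := submodule_span [seq x * y | x <- g, y <- s].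
move=> [c ->] [d ->]; rewrite mulr_suml.
apply: submodule_sum => [|i]; first exact: submodule_span.
rewrite -mulrA; apply: (SM); first by exists (c i).
rewrite mulr_sumr; apply: submodule_sum => [|k]; first exact: submodule_span.
rewrite mulrCA; apply: SM; first by exists (d k).
by apply/span_mem/allpairs_f; apply: mem_nth.
Qed.

Lemma powI_span_fg (s : seq K) n : exists g : seq K,
  (forall x, x \in g -> powI (span s) n x) /\ fsubset (powI (span s) n) (span g).
Proof.
elim: n => [|n [g [gI Ig]]] /=.
- exists [:: 1]; split; first by move=> x /[1!inE] /eqP ->; exists 1; rewrite rmorph1.
  move=> x xR; rewrite -[x]mulr1; have [_ _ SM] := submodule_span [:: 1].
  by apply: SM xR _; apply: span_mem; rewrite inE.
- exists [seq x * y | x <- g, y <- s]; split.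
  + move=> z /allpairsP [[x y] [/= xg ys ->]].
    by apply: mulI_mem; [apply: gI | apply: span_mem].
  + move=> z [m [a [b [Hab ->]]]].
    apply: submodule_sum => [|i]; first exact: submodule_span.
    by have [Ia sb] := Hab i (ltn_ord i); apply: span_allpairs_mul => //; apply: Ig.
Qed.

Lemma collect_witnesses (J : fset) (Q : K -> seq K -> Prop) (g : seq K) :
  (forall x j j', (forall y, y \in j' -> J y) -> {subset j <= j'} -> Q x j -> Q x j') ->
  (forall x, x \in g -> exists j, (forall y, y \in j -> J y) /\ Q x j) ->
  exists j, (forall y, y \in j -> J y) /\ forall x, x \in g -> Q x j.
Proof.
move=> Q_mono; elim: g => [|x g IH] gQ; first by exists [::].
have [j [jJ jQ]] := IH (fun y yg => gQ y (mem_behead (s := x :: g) yg)).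
have [k [kJ kQ]] := gQ x (mem_head x g).
have jkJ : forall y, y \in j ++ k -> J y by move=> y /[1!mem_cat] /orP [/jJ | /kJ].
exists (j ++ k); split=> // y /[1!inE] /orP [/eqP -> | yg].
- by apply: Q_mono kQ => // z zk; rewrite mem_cat zk orbT.
- by apply: Q_mono (jQ y yg) => // z zj; rewrite mem_cat zj.
Qed.

Lemma mulI_span_fg (J C : fset) (t : seq K) :
  (forall y, y \in t -> mulI J C y) ->
  exists j, (forall y, y \in j -> J y) /\ forall y, y \in t -> mulI (span j) C y.
Proof.
move=> tJC; apply: collect_witnesses => [y j j' _ jj'|y /tJC [n [a [b [Hab ->]]]]].
  by apply: mulI_subset => //; apply: span_subset.
exists [seq a i | i <- iota 0 n]; split.
- by move=> z /mapP [i /[1!mem_iota] /= i_n ->]; case: (Hab i i_n).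
- exists n, a, b; split=> // i i_n; split; last by case: (Hab i i_n).
  by apply/span_mem/map_f; rewrite mem_iota.
Qed.

End Submodules.

Section StarClosure.
Variable R : idomainType.
Local Notation K := {fraction R}.
Local Notation fset := (fset R).
Local Notation span := (@Defs.span R).
Variables (star : fset -> fset) (dom : fset -> Prop).
Hypothesis dom_nz_ideal : forall X, nz_ideal X -> dom X.
Hypothesis star_ext : forall X, dom X -> fsubset X (star X).
Hypothesis star_sub_star : forall X Y, dom X -> dom Y ->
  fsubset X (star Y) -> fsubset (star X) (star Y).
Hypothesis submodule_star : forall X, dom X -> submodule (star X).

Lemma star_mono X Y : dom X -> dom Y -> fsubset X Y -> fsubset (star X) (star Y).
Proof. by move=> dX dY XY; apply: star_sub_star => // x /XY; apply: star_ext. Qed.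

Lemma star_f_ext (B : fset) : nz_ideal B -> fsubset B (star_f star B).
Proof.
move=> Bid x Bx; have [[Bs _] [y [By y0]]] := Bid.
have xyB : fsubset (span [:: x; y]) B.
  by apply: span_sub => // z /[!inE] /orP [/eqP -> | /eqP ->].
have xy_nz : nonzero_set (span [:: x; y]).
  by exists y; split=> //; apply: span_mem; rewrite !inE eqxx orbT.
exists [:: x; y]; split=> //; split=> //.
apply: star_ext; first exact/dom_nz_ideal/(nz_ideal_span Bid.1).
by apply: span_mem; rewrite inE eqxx.
Qed.

(* Prepending a fixed nonzero j0 of J keeps the finitely generated subideals
   span (j0 :: j) nonzero, hence in the domain of star. *)
Section FgReduction.
Variables (J C : fset) (j0 : K).
Hypotheses (J_ideal : ideal J) (J_j0 : J j0) (j0_neq0 : j0 <> 0).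
Hypothesis C_nz_ideal : nz_ideal C.

Lemma span_cons_sub (j : seq K) :
  (forall y, y \in j -> J y) -> fsubset (span (j0 :: j)) J.
Proof. by move=> jJ; apply: span_sub J_ideal.1 _ => y /[1!inE] /orP [/eqP -> | /jJ]. Qed.

Lemma nz_ideal_span_cons (j : seq K) :
  (forall y, y \in j -> J y) -> nz_ideal (span (j0 :: j)).
Proof.
move=> jJ; apply: (nz_ideal_span J_ideal (span_cons_sub jJ)).
by exists j0; split=> //; apply: span_mem; rewrite inE eqxx.
Qed.

Let dom_cons_mulI j : (forall y, y \in j -> J y) -> dom (mulI (span (j0 :: j)) C).
Proof. by move=> jJ; apply/dom_nz_ideal/nz_ideal_mulI/C_nz_ideal/nz_ideal_span_cons. Qed.

Lemma star_cons_mulI_mono (j j' : seq K) :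
  (forall y, y \in j -> J y) -> (forall y, y \in j' -> J y) -> {subset j <= j'} ->
  fsubset (star (mulI (span (j0 :: j)) C)) (star (mulI (span (j0 :: j')) C)).
Proof.
move=> jJ j'J jj'; apply: star_mono; [exact: dom_cons_mulI.. |].
apply: mulI_subset => //; apply: span_subset => y /[!inE] /orP [-> // | /jj' ->].
by rewrite orbT.
Qed.

Lemma star_f_mulI_fg x : star_f star (mulI J C) x ->
  exists j, (forall y, y \in j -> J y) /\ star (mulI (span (j0 :: j)) C) x.
Proof.
move=> [t [tJC [t_nz tx]]].
have [j [jJ tjC]] := mulI_span_fg (fun y yt => tJC y (span_mem yt)).
have JC_ideal : ideal (mulI J C).
  by apply: (nz_ideal_mulI _ C_nz_ideal).1; split=> //; exists j0.
have t_dom : dom (span t) by apply/dom_nz_ideal/(nz_ideal_span JC_ideal tJC).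
have t_sub : fsubset (span t) (mulI (span (j0 :: j)) C).
  apply: span_sub; first exact/submodule_mulI/submodule_span.
  move=> y /tjC; apply: mulI_subset => //; apply: span_subset => z zj.
  by rewrite inE zj orbT.
by exists j; split=> //; apply: star_mono t_dom (dom_cons_mulI jJ) t_sub _ tx.
Qed.

Lemma star_f_mulI_cover (g : seq K) :
  (forall x, x \in g -> star_f star (mulI J C) x) ->
  exists j, (forall y, y \in j -> J y) /\
    forall x, x \in g -> star (mulI (span (j0 :: j)) C) x.
Proof.
move=> gJC; apply: collect_witnesses => [x j j' j'J jj' jx|x /gJC].
- by apply: star_cons_mulI_mono jx => // y yj; apply/j'J/jj'.
- exact: star_f_mulI_fg.
Qed.

End FgReduction.

Lemma star_reduction_fg (s : seq K) (J : fset) (j0 : K) n :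
  nz_ideal (span s) -> ideal J -> J j0 -> j0 <> 0 -> fsubset J (span s) ->
  star_f star (mulI J (powI (span s) n)) = star_f star (powI (span s) n.+1) ->
  exists j, (forall y, y \in j -> J y) /\
    star (mulI (span (j0 :: j)) (powI (span s) n)) = star (powI (span s) n.+1).
Proof.
move=> I_nz J_ideal Jj0 j0_neq0 JI red.
have C_nz := nz_ideal_powI n I_nz.
have I1_dom : dom (powI (span s) n.+1) by apply/dom_nz_ideal/nz_ideal_powI.
have [g [gI Ig]] := powI_span_fg s n.+1.
have gJC : forall x, x \in g -> star_f star (mulI J (powI (span s) n)) x.
  by move=> x /gI /(star_f_ext (nz_ideal_powI n.+1 I_nz)); rewrite red.
have [j [jJ gj]] := star_f_mulI_cover J_ideal Jj0 j0_neq0 C_nz gJC.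
have J0C_dom : dom (mulI (span (j0 :: j)) (powI (span s) n)).
  exact/dom_nz_ideal/nz_ideal_mulI/C_nz/(nz_ideal_span_cons J_ideal Jj0 j0_neq0 jJ).
exists j; split=> //; apply: fsubset_antisym.
- apply: star_mono => // y /mulIC; apply: mulI_subset => // z zJ0.
  exact/JI/(span_cons_sub J_ideal Jj0 jJ).
- apply: star_sub_star => // y /Ig.
  exact: (span_sub (submodule_star J0C_dom) gj).
Qed.

Lemma star_f_eq_of_star_eq (t : seq K) (J I : fset) :
  nz_ideal I -> fsubset (span t) J -> fsubset J I -> nonzero_set (span t) ->
  star (span t) = star I -> star_f star J = star_f star I.
Proof.
move=> I_nz tJ JI t_nz tI; apply: fsubset_antisym => x [u [uX [u_nz ux]]].
- by exists u; split=> // y /uX /JI.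
- exists t; split=> //; split=> //; rewrite tI; apply: star_mono ux => //.
  + exact/dom_nz_ideal/(nz_ideal_span I_nz.1 uX).
  + exact: dom_nz_ideal.
Qed.

Lemma star_f_basic_of_star_basic :
  (forall I, fg_ideal I -> star_basic star I) ->
  forall I, fg_ideal I -> star_basic (star_f star) I.
Proof.
move=> basic I I_fg J [J_ideal [j0 [Jj0 j0_neq0]] JI [n red]].
have I_nz := nz_ideal_fg I_fg.
have [[s [_ I_span]] _] := I_fg; subst I.
have [j [jJ J0_red]] := star_reduction_fg I_nz J_ideal Jj0 j0_neq0 JI red.
have J0_nz := nz_ideal_span_cons J_ideal Jj0 j0_neq0 jJ.
have J0J := span_cons_sub J_ideal Jj0 jJ.
apply: (star_f_eq_of_star_eq I_nz J0J JI J0_nz.2).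
apply: basic => //; split; [exact: J0_nz.1 | exact: J0_nz.2 | |by exists n].
by move=> y /J0J /JI.
Qed.

End StarClosure.

Section Instances.
Variable R : idomainType.
Local Notation fset := (fset R).

Lemma frac_ideal_nz_ideal (X : fset) : nz_ideal X -> frac_ideal X.
Proof.
move=> [[Xs XR] X_nz]; split=> //; exists 1; split; first exact: oner_neq0.
by move=> x /XR; rewrite rmorph1 mul1r.
Qed.

Lemma submodule_colon (X : fset) : submodule (colon X).
Proof.
have [R0 RD RM] := submodule_inR R; split.
- by move=> y _; rewrite mul0r.
- by move=> x y Xx Xy z Xz; rewrite mulrDl; apply: RD; [apply: Xx | apply: Xy].
- by move=> r x Rr Xx z Xz; rewrite -mulrA; apply: RM => //; apply: Xx.
Qed.

Lemma v_op_ext (X : fset) : fsubset X (v_op X).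
Proof. by move=> x Xx y Xy; rewrite mulrC; apply: Xy. Qed.

Lemma v_op_sub_v_op (X Y : fset) : fsubset X (v_op Y) -> fsubset (v_op X) (v_op Y).
Proof. by move=> XY x Xx y Yy; apply: Xx => z /XY Yz; rewrite mulrC; apply: Yz. Qed.

End Instances.

Theorem proposition1p8 (R : idomainType) :
  (forall star : fset R -> fset R, is_star_op star ->
     (forall I, fg_ideal I -> star_basic star I) ->
     forall I, fg_ideal I -> star_basic (star_f star) I)
  /\
  ((forall I, fg_ideal I -> star_basic (@v_op R) I) ->
     forall I, fg_ideal I -> star_basic (@t_op R) I).
Proof.
split.
- move=> star [star_frac [_ _ star_ext star_mono star_idem]].
  apply: (star_f_basic_of_star_basic (dom := @frac_ideal R)).
  + exact: frac_ideal_nz_ideal.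
  + exact: star_ext.
  + move=> X Y dX dY XY; rewrite -(star_idem Y dY).
    exact: star_mono (star_frac Y dY) XY.
  + by move=> X /star_frac [].
- apply: (star_f_basic_of_star_basic (dom := fun _ => True)) => //.
  + by move=> X _; apply: v_op_ext.
  + by move=> X Y _ _; apply: v_op_sub_v_op.
  + by move=> X _; apply: submodule_colon.
Qed.
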